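(* Let $\theta_N=1+N^{-2/3}w_N$ where $w_N>0$, $(\log\log N)^2/w_N\to0$ and $w_N/(\log N)^2\to0$. For $1\le i\le N$ let $r_i=1+\sqrt{1-\frac{i-1}{N\theta_N^2}}$, $m_i=1-\sqrt{1-\frac{i-1}{N\theta_N^2}}$, $\gamma_i=m_i/r_i$, and $g_i=1+\gamma_i+\gamma_i\gamma_{i+1}+\dots+\gamma_i\gamma_{i+1}\cdots\gamma_N$. Then for every $k>0$, for all sufficiently large $N$ and all $3\le i\le N-N^{1/3}$, \[ g_i>\frac{r_i}{2(r_i-1)}\big(1-\log^{-k}N\big); \] and for all sufficiently large $N$ and all $3\le i\le N$, \[ g_i<\frac{r_i}{2(r_i-1)}\big(1+w_N^{-3/2}\big). \] *)

From Stdlib Require Import Reals Lra.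
From Coquelicot Require Import Coquelicot.
Open Scope R_scope.

Definition theta (w : nat -> R) (N : nat) : R :=
  1 + Rpower (INR N) (-(2/3)) * w N.

Definition sq (w : nat -> R) (N i : nat) : R :=
  sqrt (1 - (INR i - 1) / (INR N * (theta w N)^2)).

Definition r_ (w : nat -> R) (N i : nat) : R := 1 + sq w N i.
Definition m_ (w : nat -> R) (N i : nat) : R := 1 - sq w N i.
Definition gam (w : nat -> R) (N i : nat) : R := m_ w N i / r_ w N i.

Fixpoint prodn (f : nat -> R) (i n : nat) : R :=
  match n with
  | O => 1
  | S n' => prodn f i n' * f (i + n')%nat
  end.

Fixpoint sumn (f : nat -> R) (n : nat) : R :=
  match n with
  | O => 0
  | S n' => sumn f n' + f n'
  end.

(* g_i = 1 + gam_i + gam_i gam_{i+1} + ... + gam_i ... gam_N :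
   the terms are prodn gam i t for t = 0, ..., N+1-i. *)
Definition g_ (w : nat -> R) (N i : nat) : R :=
  sumn (fun t => prodn (gam w N) i t) (N + 2 - i)%nat.

From Stdlib Require Import Reals Lra Lia.
From Coquelicot Require Import Coquelicot.
Open Scope R_scope.

(* Write s_j = r_j - 1, so that gamma_j = (1 - s_j)/(1 + s_j) and
   r_i/(2(r_i - 1)) = (1 + s_i)/(2 s_i) = ghat(s_i) is the fixed point of
   x |-> 1 + gamma_i x, while g_i = 1 + gamma_i g_(i+1) and g_(N+1) = 1.
   Since s_j decreases in j, gamma_j >= gamma_i for j >= i, so g_i dominates
   the geometric sum ghat(s_i) (1 - gamma_i^(N+2-i)); and
   gamma_i^(N+2-i) <= exp(-s_i (N+2-i)) is tiny because
   s_i >= s_(N+1) >= sqrt(theta - 1)/theta = sqrt(w_N)/(N^(1/3) theta) and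
   N + 2 - i > N^(1/3).  For the upper bound, s_j^2 - s_(j+1)^2 = 1/(N theta^2)
   makes ghat(s_(j+1)) - ghat(s_j) <= 1/(4 N theta^2 s_(N+1)^3)
   <= theta w_N^(-3/2)/4, a drift small enough for the bound
   g_j < ghat(s_j)(1 + w_N^(-3/2)) to propagate from j = N+1 down to j = i. *)

Lemma prodn_succ_l f i t : prodn f i (S t) = f i * prodn f (S i) t.
Proof.
  induction t as [|t IH]; simpl.
  - rewrite Nat.add_0_r; ring.
  - simpl in IH; rewrite IH, Nat.add_succ_r; ring.
Qed.

Lemma sumn_succ_l h n : sumn h (S n) = h 0%nat + sumn (fun t => h (S t)) n.
Proof. induction n as [|n IH]; simpl in *; [|rewrite IH]; ring. Qed.

Lemma sumn_ext h1 h2 n : (forall t, h1 t = h2 t) -> sumn h1 n = sumn h2 n.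
Proof. intros H; induction n as [|n IH]; simpl; [|rewrite IH, H]; reflexivity. Qed.

Lemma sumn_scal_l c h n : sumn (fun t => c * h t) n = c * sumn h n.
Proof. induction n as [|n IH]; simpl; [|rewrite IH]; ring. Qed.

Lemma sumn_le h1 h2 n :
  (forall t, (t < n)%nat -> h1 t <= h2 t) -> sumn h1 n <= sumn h2 n.
Proof.
  intros H; induction n as [|n IH]; simpl; [lra|].
  apply Rplus_le_compat; [apply IH; intros t Ht|]; apply H; lia.
Qed.

Lemma sumn_geom x n : sumn (pow x) n * (1 - x) = 1 - x ^ n.
Proof. induction n as [|n IH]; simpl; [|rewrite Rmult_plus_distr_r, IH]; ring. Qed.

Lemma pow_le_prodn f i t :
  (forall j, (i <= j)%nat -> 0 <= f i <= f j) -> f i ^ t <= prodn f i t.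
Proof.
  intros H; induction t as [|t IH]; simpl; [lra|].
  rewrite Rmult_comm; apply Rmult_le_compat; auto.
  - apply pow_le, (H i); lia.
  - apply (H i); lia.
  - apply H; lia.
Qed.

Lemma g_succ w N i : (i <= N)%nat -> g_ w N i = 1 + gam w N i * g_ w N (S i).
Proof.
  intros Hi; unfold g_.
  replace (N + 2 - i)%nat with (S (N + 2 - S i)) by lia.
  rewrite sumn_succ_l, <- sumn_scal_l; simpl prodn at 1.
  f_equal; apply sumn_ext; intros t; apply prodn_succ_l.
Qed.

Lemma g_last w N : g_ w N (S N) = 1.
Proof. unfold g_; replace (N + 2 - S N)%nat with 1%nat by lia; simpl; ring. Qed.

Definition gamma_s (s : R) : R := (1 - s) / (1 + s).

Definition ghat (s : R) : R := (1 + s) / (2 * s).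

Lemma gam_gamma_s w N j : gam w N j = gamma_s (sq w N j).
Proof. reflexivity. Qed.

Lemma r_ratio_ghat w N i : r_ w N i / (2 * (r_ w N i - 1)) = ghat (sq w N i).
Proof. unfold r_, ghat; do 3 f_equal; ring. Qed.

Lemma gamma_s_bounds s : 0 <= s <= 1 -> 0 <= gamma_s s <= 1.
Proof.
  intros Hs; unfold gamma_s; split.
  - apply Rdiv_le_0_compat; lra.
  - apply Rmult_le_reg_r with (1 + s); [lra|].
    field_simplify; lra.
Qed.

Lemma gamma_s_antitone a b : 0 <= b <= a -> gamma_s a <= gamma_s b.
Proof.
  intros Hab; unfold gamma_s.
  apply Rmult_le_reg_r with ((1 + a) * (1 + b)); [nra|].
  field_simplify; nra.
Qed.

Lemma gamma_s_le_exp s : 0 <= s <= 1 -> gamma_s s <= exp (- s).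
Proof.
  intros Hs; apply Rle_trans with (1 - s); [|pose proof (exp_ineq1_le (- s)); lra].
  unfold gamma_s; apply Rmult_le_reg_r with (1 + s); [lra|].
  field_simplify; nra.
Qed.

Lemma ghat_pos s : 0 < s -> 0 < ghat s.
Proof. intros Hs; unfold ghat; apply Rdiv_lt_0_compat; lra. Qed.

Lemma ghat_ge1 s : 0 < s <= 1 -> 1 <= ghat s.
Proof.
  intros Hs; unfold ghat; apply Rmult_le_reg_r with (2 * s); [lra|].
  field_simplify; lra.
Qed.

Lemma ghat_fixpoint s : 0 < s -> ghat s = 1 + gamma_s s * ghat s.
Proof. intros Hs; unfold ghat, gamma_s; field; lra. Qed.

Lemma sumn_pow_gamma_s s n :
  0 < s -> sumn (pow (gamma_s s)) n = ghat s * (1 - gamma_s s ^ n).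
Proof.
  intros Hs.
  assert (Hinv : ghat s * (1 - gamma_s s) = 1) by (unfold ghat, gamma_s; field; lra).
  rewrite <- sumn_geom.
  transitivity (sumn (pow (gamma_s s)) n * (ghat s * (1 - gamma_s s))); [rewrite Hinv|]; ring.
Qed.

Lemma ghat_sub_le sg a b :
  0 < sg <= b -> b <= a -> ghat b - ghat a <= (a ^ 2 - b ^ 2) / (4 * sg ^ 3).
Proof.
  intros Hb Hab.
  replace (ghat b - ghat a) with ((a ^ 2 - b ^ 2) / (2 * a * b * (a + b)))
    by (unfold ghat; field; lra).
  unfold Rdiv; apply Rmult_le_compat_l; [nra|].
  apply Rinv_le_contravar; [apply Rmult_lt_0_compat; [lra|apply pow_lt; lra]|].
  assert (sg * sg <= a * b) by (apply Rmult_le_compat; lra).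
  simpl; nra.
Qed.

Lemma fixpoint_step_lt gm F F' G d e :
  0 <= gm <= 1 -> 0 < e -> F = 1 + gm * F -> F' <= F + d -> (1 + e) * d < e ->
  G <= F' * (1 + e) -> 1 + gm * G < F * (1 + e).
Proof.
  intros Hgm He HF HF' Hd HG.
  assert (gm * G <= gm * (F + d) * (1 + e)).
  { rewrite Rmult_assoc; apply Rmult_le_compat_l; [lra|].
    apply Rle_trans with (F' * (1 + e)); [exact HG|].
    apply Rmult_le_compat_r; lra. }
  assert (gm * ((1 + e) * d) < e)
    by (destruct (Rle_lt_dec 0 ((1 + e) * d)); nra).
  rewrite HF; nra.
Qed.

Section Profile.

Variables (w : nat -> R) (N : nat).
Hypotheses (HN : (1 <= N)%nat) (Hth : 1 < theta w N).

Local Notation T := (INR N * theta w N ^ 2).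
Local Notation s := (sq w N).

Lemma T_gt_N : INR N < T.
Proof.
  assert (1 <= INR N) by (apply (le_INR 1); exact HN).
  assert (1 < theta w N ^ 2) by nra.
  nra.
Qed.

Lemma T_pos : 0 < T.
Proof. pose proof T_gt_N; pose proof (pos_INR N); lra. Qed.

Lemma radicand_pos j : (1 <= j <= S N)%nat -> 0 < 1 - (INR j - 1) / T.
Proof.
  intros Hj.
  assert (INR j <= INR N + 1) by (rewrite <- S_INR; apply le_INR; lia).
  assert (1 <= INR j) by (apply (le_INR 1); lia).
  assert (0 < INR N) by (apply lt_0_INR; lia).
  pose proof T_gt_N.
  assert ((INR j - 1) / T < 1); [|lra].
  apply Rmult_lt_reg_r with T; [lra|].
  field_simplify; lra.
Qed.

Lemma sq_sqr j : (1 <= j <= S N)%nat -> s j ^ 2 = 1 - (INR j - 1) / T.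
Proof. intros Hj; apply pow2_sqrt, Rlt_le, radicand_pos, Hj. Qed.

Lemma sq_le1 j : (1 <= j)%nat -> s j <= 1.
Proof.
  intros Hj; rewrite <- sqrt_1; apply sqrt_le_1_alt.
  assert (1 <= INR j) by (apply (le_INR 1); lia).
  assert (0 <= (INR j - 1) / T) by (apply Rdiv_le_0_compat; pose proof T_pos; lra).
  lra.
Qed.

Lemma sq_antitone i j : (1 <= i <= j)%nat -> s j <= s i.
Proof.
  intros Hij; apply sqrt_le_1_alt.
  assert (INR i <= INR j) by (apply le_INR; lia).
  assert ((INR i - 1) / T <= (INR j - 1) / T); [|lra].
  apply Rmult_le_compat_r; [|lra].
  left; apply Rinv_0_lt_compat, T_pos.
Qed.

Lemma sq_sqr_sub i : (1 <= i <= N)%nat -> s i ^ 2 - s (S i) ^ 2 = / T.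
Proof.
  intros Hi; rewrite !sq_sqr, S_INR by lia.
  field; split; [lra|apply not_0_INR; lia].
Qed.

Lemma sq_last_pos : 0 < s (S N).
Proof. apply sqrt_lt_R0, radicand_pos; lia. Qed.

Lemma sq_range j : (1 <= j <= S N)%nat -> 0 < s j <= 1.
Proof.
  intros Hj; split; [|apply sq_le1; lia].
  apply Rlt_le_trans with (s (S N)); [exact sq_last_pos|apply sq_antitone; lia].
Qed.

Lemma sq_last_ge : sqrt (theta w N - 1) / theta w N <= s (S N).
Proof.
  rewrite <- (sqrt_pow2 (theta w N)) at 2 by lra.
  rewrite <- sqrt_div_alt by (apply pow_lt; lra).
  apply sqrt_le_1_alt.
  assert (Hlast : 1 - (INR (S N) - 1) / T = 1 - / theta w N ^ 2).
  { rewrite S_INR; field; split; [lra|apply not_0_INR; lia]. }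
  rewrite Hlast.
  apply Rmult_le_reg_r with (theta w N ^ 2); [apply pow_lt; lra|].
  field_simplify; [nra|lra|lra].
Qed.

Lemma g_upper e :
  0 < e -> (1 + e) * (/ T / (4 * s (S N) ^ 3)) < e ->
  forall i, (1 <= i <= S N)%nat -> g_ w N i < ghat (s i) * (1 + e).
Proof.
  intros He Hmargin i Hi.
  remember (S N - i)%nat as d eqn:Hd; revert i Hi Hd.
  induction d as [|d IH]; intros i Hi Hd.
  - replace i with (S N) by lia; rewrite g_last.
    pose proof (ghat_ge1 _ (sq_range (S N) ltac:(lia))); nra.
  - rewrite g_succ, gam_gamma_s by lia.
    pose proof (sq_range i ltac:(lia)).
    pose proof (sq_range (S i) ltac:(lia)).
    apply fixpoint_step_lt with (ghat (s (S i))) (/ T / (4 * s (S N) ^ 3)).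
    + apply gamma_s_bounds; lra.
    + exact He.
    + apply ghat_fixpoint; lra.
    + rewrite <- (sq_sqr_sub i) by lia.
      enough (ghat (s (S i)) - ghat (s i) <= (s i ^ 2 - s (S i) ^ 2) / (4 * s (S N) ^ 3))
        by lra.
      apply ghat_sub_le; [split; [exact sq_last_pos|]|]; apply sq_antitone; lia.
    + exact Hmargin.
    + apply Rlt_le, IH; lia.
Qed.

Lemma g_lower i :
  (1 <= i <= S N)%nat -> ghat (s i) * (1 - gamma_s (s i) ^ (N + 2 - i)) <= g_ w N i.
Proof.
  intros Hi; pose proof (sq_range i Hi).
  rewrite <- sumn_pow_gamma_s by lra.
  apply sumn_le; intros t _.
  apply (pow_le_prodn (gam w N)); intros j Hj; rewrite !gam_gamma_s.
  split; [apply gamma_s_bounds; lra|].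
  apply gamma_s_antitone; split; [apply sqrt_pos|apply sq_antitone; lia].
Qed.

End Profile.

Lemma ln_ge_3 N : (27 <= N)%nat -> 3 <= ln (INR N).
Proof.
  intros HN.
  assert (H27 : 27 <= INR N) by (replace 27 with (INR 27) by (simpl; ring); apply le_INR, HN).
  assert (exp 3 <= 27).
  { replace 3 with (1 + 1 + 1) by ring; rewrite !exp_plus.
    pose proof exp_le_3; pose proof (exp_pos 1).
    apply Rle_trans with (3 * 3 * 3); [|lra].
    repeat apply Rmult_le_compat; nra. }
  rewrite <- (ln_exp 3); apply ln_le; [apply exp_pos|lra].
Qed.

Lemma ln_ln_ge_1 N : (27 <= N)%nat -> 1 <= ln (ln (INR N)).
Proof.
  intros HN; pose proof (ln_ge_3 N HN); pose proof exp_le_3.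
  rewrite <- (ln_exp 1); apply ln_le; [apply exp_pos|lra].
Qed.

Lemma cube_root_pow x n : 0 < x -> Rpower x (1/3) ^ n = Rpower x (INR n / 3).
Proof.
  intros Hx; rewrite <- Rpower_pow, Rpower_mult by (apply exp_pos).
  f_equal; field.
Qed.

Lemma cube_root_cube x : 0 < x -> Rpower x (1/3) ^ 3 = x.
Proof.
  intros Hx; rewrite cube_root_pow by exact Hx.
  replace (INR 3 / 3) with 1 by (simpl; field); apply Rpower_1, Hx.
Qed.

Lemma ln_lt_3_cube_root x : 0 < x -> ln x < 3 * Rpower x (1/3).
Proof.
  intros Hx; unfold Rpower; pose proof (exp_ineq1_le (1/3 * ln x)); lra.
Qed.

Lemma Rpower_neg_three_halves x : 0 < x -> Rpower x (-(3/2)) = / sqrt x ^ 3.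
Proof.
  intros Hx; rewrite Rpower_Ropp, <- Rpower_sqrt, <- Rpower_pow, Rpower_mult by
    (try apply sqrt_lt_R0; try apply exp_pos; exact Hx).
  do 2 f_equal; simpl; field.
Qed.

Lemma theta_sub1 w N :
  (1 <= N)%nat -> theta w N - 1 = w N / Rpower (INR N) (1/3) ^ 2.
Proof.
  intros HN; assert (0 < INR N) by (apply lt_0_INR; lia).
  unfold theta; rewrite cube_root_pow, Rpower_Ropp by exact H.
  replace (INR 2 / 3) with (2/3) by (simpl; field); field.
  apply Rgt_not_eq; apply exp_pos.
Qed.

Lemma sqrt_theta_sub1 w N : (1 <= N)%nat -> 0 <= w N ->
  sqrt (theta w N - 1) * Rpower (INR N) (1/3) = sqrt (w N).
Proof.
  intros HN Hw; assert (Hu : 0 < Rpower (INR N) (1/3)) by apply exp_pos.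
  rewrite (theta_sub1 w N HN), sqrt_div_alt, sqrt_pow2 by (try apply pow_lt; lra).
  field; lra.
Qed.

Lemma N_sqrt_theta_sub1_cube w N : (1 <= N)%nat -> 0 <= w N ->
  INR N * sqrt (theta w N - 1) ^ 3 = sqrt (w N) ^ 3.
Proof.
  intros HN Hw; rewrite <- (sqrt_theta_sub1 w N HN Hw), Rpow_mult_distr.
  rewrite cube_root_cube by (apply lt_0_INR; lia); ring.
Qed.

Lemma upper_margin n th sg c v :
  0 < n -> 1 < th < 2 -> 0 < c -> c / th <= sg -> 1 <= v -> n * c ^ 3 = v ^ 3 ->
  (1 + / v ^ 3) * (/ (n * th ^ 2) / (4 * sg ^ 3)) < / v ^ 3.
Proof.
  intros Hn Hth Hc Hsg Hv Hnc.
  assert (Hv3 : 1 <= v ^ 3) by (rewrite <- (pow1 3); apply pow_incr; lra).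
  assert (He : 0 < / v ^ 3 <= 1).
  { split; [apply Rinv_0_lt_compat; lra|rewrite <- Rinv_1; apply Rinv_le_contravar; lra]. }
  assert (Hbound : / (n * th ^ 2) / (4 * sg ^ 3) <= th / 4 * / v ^ 3).
  { rewrite <- Hnc.
    replace (th / 4 * / (n * c ^ 3)) with (/ (n * th ^ 2) / (4 * (c / th) ^ 3))
      by (field; repeat split; lra).
    apply Rmult_le_compat_l.
    - left; apply Rinv_0_lt_compat, Rmult_lt_0_compat; [lra|apply pow_lt; lra].
    - apply Rinv_le_contravar.
      + apply Rmult_lt_0_compat; [lra|apply pow_lt, Rdiv_lt_0_compat; lra].
      + apply Rmult_le_compat_l; [lra|apply pow_incr; split; [apply Rlt_le, Rdiv_lt_0_compat|]; lra]. }
  set (e := / v ^ 3) in *.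
  apply Rle_lt_trans with ((1 + e) * (th / 4 * e)); [apply Rmult_le_compat_l; lra|nra].
Qed.

Lemma g_upper_bound w N i :
  (1 <= N)%nat -> 0 < w N -> 1 < theta w N < 2 -> 1 <= sqrt (w N) -> (1 <= i <= N)%nat ->
  g_ w N i < r_ w N i / (2 * (r_ w N i - 1)) * (1 + Rpower (w N) (-(3/2))).
Proof.
  intros HN Hw Hth Hv Hi.
  rewrite r_ratio_ghat, Rpower_neg_three_halves by exact Hw.
  apply g_upper; [exact HN|lra|apply Rinv_0_lt_compat, pow_lt; lra| |lia].
  apply upper_margin with (sqrt (theta w N - 1)).
  - apply lt_0_INR; lia.
  - exact Hth.
  - apply sqrt_lt_R0; lra.
  - apply sq_last_ge; [exact HN|lra].
  - exact Hv.
  - apply N_sqrt_theta_sub1_cube; lra || lia.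
Qed.

Lemma g_lower_bound w N k i :
  0 <= w N -> 1 < theta w N < 2 -> 2 * k * ln (ln (INR N)) < sqrt (w N) ->
  (1 <= i)%nat -> INR i <= INR N - Rpower (INR N) (1/3) ->
  g_ w N i > r_ w N i / (2 * (r_ w N i - 1)) * (1 - Rpower (ln (INR N)) (- k)).
Proof.
  intros Hw Hth Hv Hi HiN.
  set (u := Rpower (INR N) (1/3)) in *.
  assert (Hu : 0 < u) by apply exp_pos.
  assert (HiN' : (i < N)%nat) by (apply INR_lt; lra).
  assert (HN : (1 <= N)%nat) by lia.
  set (n := (N + 2 - i)%nat).
  assert (Hn : u < INR n).
  { unfold n; rewrite minus_INR, plus_INR by lia; simpl (INR 2); lra. }
  assert (Hsi := sq_range w N HN (proj1 Hth) i ltac:(lia)).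
  set (si := sq w N i) in *.
  set (c := sqrt (theta w N - 1)).
  assert (Hc : 0 < c) by (apply sqrt_lt_R0; lra).
  assert (Hcsi : c / theta w N <= si).
  { apply Rle_trans with (sq w N (S N)); [apply sq_last_ge; [exact HN|lra]|].
    apply sq_antitone; [exact HN|lra|lia]. }
  assert (Hsn : sqrt (w N) / theta w N < si * INR n).
  { rewrite <- (sqrt_theta_sub1 w N HN Hw); fold c u.
    apply Rlt_le_trans with (c / theta w N * INR n).
    - replace (c * u / theta w N) with (c / theta w N * u) by (field; lra).
      apply Rmult_lt_compat_l; [apply Rdiv_lt_0_compat; lra|exact Hn].
    - apply Rmult_le_compat_r; [apply pos_INR|exact Hcsi]. }
  assert (Hpow : gamma_s si ^ n < Rpower (ln (INR N)) (- k)).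
  { apply Rle_lt_trans with (exp (- si) ^ n).
    - apply pow_incr; split; [apply gamma_s_bounds; lra|apply gamma_s_le_exp; lra].
    - rewrite <- Rpower_pow by apply exp_pos; unfold Rpower; rewrite ln_exp.
      apply exp_increasing.
      assert (sqrt (w N) / 2 <= sqrt (w N) / theta w N).
      { apply Rmult_le_compat_l; [apply sqrt_pos|apply Rinv_le_contravar; lra]. }
      lra. }
  rewrite r_ratio_ghat; fold si.
  apply Rlt_le_trans with (ghat si * (1 - gamma_s si ^ n)).
  - apply Rmult_lt_compat_l; [apply ghat_pos|]; lra.
  - apply g_lower; [exact HN|lra|lia].
Qed.

Lemma is_lim_seq_0_eventually_lt (f : nat -> R) eps :
  0 < eps -> is_lim_seq f 0 -> eventually (fun n => f n < eps).
Proof.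
  intros Heps Hf; apply is_lim_seq_spec in Hf.
  destruct (Hf (mkposreal eps Heps)) as [N0 HN0]; exists N0; intros n Hn.
  specialize (HN0 n Hn); simpl in HN0.
  pose proof (Rle_abs (f n - 0)); lra.
Qed.

Lemma eventually_ge_27 : eventually (fun N => 27 <= N)%nat.
Proof. exists 27%nat; auto. Qed.

Lemma theta_eventually_lt_2 w :
  (forall N, 0 < w N) -> is_lim_seq (fun N => w N / ln (INR N) ^ 2) 0 ->
  eventually (fun N => 1 < theta w N < 2).
Proof.
  intros Hw Hlim.
  generalize (filter_and _ _ eventually_ge_27 (is_lim_seq_0_eventually_lt _ (/ 9) ltac:(lra) Hlim)).
  apply filter_imp; intros N [HN Hsmall].
  pose proof (ln_ge_3 N HN) as Hln.
  assert (HN0 : 0 < INR N) by (apply lt_0_INR; lia).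
  pose proof (ln_lt_3_cube_root _ HN0) as Hcube.
  set (u := Rpower (INR N) (1/3)) in *.
  assert (Hu : 0 < u) by apply exp_pos.
  assert (Hwu : w N < u ^ 2).
  { apply Rlt_trans with (ln (INR N) ^ 2 / 9); [|nra].
    apply Rmult_lt_reg_r with (/ ln (INR N) ^ 2); [apply Rinv_0_lt_compat; nra|].
    replace (ln (INR N) ^ 2 / 9 * / ln (INR N) ^ 2) with (/ 9) by (field; lra).
    exact Hsmall. }
  rewrite <- (Rplus_minus 1 (theta w N)), (theta_sub1 w N) by lia; fold u.
  assert (0 < w N / u ^ 2 < 1); [|lra].
  split; [apply Rdiv_lt_0_compat; [apply Hw|apply pow_lt; lra]|].
  apply Rmult_lt_reg_r with (u ^ 2); [apply pow_lt; lra|].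
  field_simplify; lra.
Qed.

Lemma sqrt_w_eventually_gt w c :
  (forall N, 0 < w N) -> 0 < c -> is_lim_seq (fun N => ln (ln (INR N)) ^ 2 / w N) 0 ->
  eventually (fun N => c * ln (ln (INR N)) < sqrt (w N)).
Proof.
  intros Hw Hc Hlim.
  assert (Hc2 : 0 < / c ^ 2) by (apply Rinv_0_lt_compat, pow_lt, Hc).
  generalize (filter_and _ _ eventually_ge_27 (is_lim_seq_0_eventually_lt _ _ Hc2 Hlim)).
  apply filter_imp; intros N [HN Hsmall].
  pose proof (ln_ln_ge_1 N HN); pose proof (Hw N).
  rewrite <- (sqrt_pow2 (c * ln (ln (INR N)))) by nra.
  apply sqrt_lt_1_alt; split; [nra|].
  replace ((c * ln (ln (INR N))) ^ 2) with (ln (ln (INR N)) ^ 2 / w N * (c ^ 2 * w N))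
    by (field; lra).
  apply Rlt_le_trans with (/ c ^ 2 * (c ^ 2 * w N)).
  - apply Rmult_lt_compat_r; [apply Rmult_lt_0_compat; [apply pow_lt|]; lra|exact Hsmall].
  - right; field; lra.
Qed.

Theorem lemma3 (w : nat -> R)
  (hw_pos : forall N : nat, 0 < w N)
  (hw_low : is_lim_seq (fun N => (ln (ln (INR N)))^2 / w N) 0)
  (hw_up : is_lim_seq (fun N => w N / (ln (INR N))^2) 0) :
  (forall k : R, 0 < k ->
     exists N0 : nat, forall N : nat, (N0 <= N)%nat ->
       forall i : nat, (3 <= i)%nat -> INR i <= INR N - Rpower (INR N) (1/3) ->
         g_ w N i > r_ w N i / (2 * (r_ w N i - 1)) * (1 - Rpower (ln (INR N)) (- k)))
  /\
  (exists N0 : nat, forall N : nat, (N0 <= N)%nat ->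
     forall i : nat, (3 <= i)%nat -> (i <= N)%nat ->
       g_ w N i < r_ w N i / (2 * (r_ w N i - 1)) * (1 + Rpower (w N) (-(3/2)))).
Proof.
  pose proof (theta_eventually_lt_2 w hw_pos hw_up) as Htheta.
  split.
  - intros k Hk.
    destruct (filter_and _ _ Htheta (sqrt_w_eventually_gt w (2 * k) hw_pos ltac:(lra) hw_low))
      as [N0 HN0].
    exists N0; intros N HN i Hi HiN; destruct (HN0 N HN) as [Hth Hv].
    apply g_lower_bound; [apply Rlt_le, hw_pos|exact Hth|exact Hv|lia|exact HiN].
  - destruct (filter_and _ _ eventually_ge_27
      (filter_and _ _ Htheta (sqrt_w_eventually_gt w 1 hw_pos ltac:(lra) hw_low)))
      as [N0 HN0].
    exists N0; intros N HN i Hi HiN; destruct (HN0 N HN) as (H27 & Hth & Hv).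
    pose proof (ln_ln_ge_1 N H27).
    apply g_upper_bound; [lia|apply hw_pos|exact Hth|lra|lia].
Qed.
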